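(* Let $N\ge 2$. Consider the encoding of basis states $|k_1,k_2,\dots\rangle$, $k_i\in\mathbb Z_N$, with the convention $k_m=0$ for $m\le 0$: $$|k_1,k_2,\dots\rangle\longmapsto\bigotimes_{i=1}^{+\infty}|k_i+k_{i-2},\;k_i+k_{i-1}+k_{i-2}\rangle,$$ where all additions are modulo $N$ (so input $k_i$ contributes to output registers $2i-1$ and $2i$). Then this quantum convolutional code corrects up to one spin flip error for every four consecutive quantum registers, i.e. it corrects the error set consisting of all operators $\bigotimes_{r\ge1}X_r^{a_r}$ ($a_r\in\mathbb Z_N$) such that among any four consecutive output registers at most one has $a_r\neq 0$.
   Context: Each register is an $N$-state system with orthonormal basis $|j\rangle$, $j\in\mathbb Z_N$; $X_r$ denotes the spin flip $|j\rangle\mapsto|j+1\bmod N\rangle$ on output register $r$. An encoding $|\mathbf k\rangle\mapsto|\mathbf k_{\rm encode}\rangle$ corrects an error set $E$ if for all $\mathcal A,\mathcal B\in E$ and all input labels $\mathbf k,\mathbf k'$: $\langle\mathbf k'_{\rm encode}|\mathcal A^\dagger\mathcal B|\mathbf k_{\rm encode}\rangle=\Lambda_{\mathcal A,\mathcal B}\delta_{\mathbf k\mathbf k'}$ with $\Lambda_{\mathcal A,\mathcal B}\in\mathbb C$ independent of $\mathbf k,\mathbf k'$. *)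

From mathcomp Require Import all_boot all_algebra all_field.
From Stdlib Require Import ClassicalEpsilon.
Set Implicit Arguments. Unset Strict Implicit. Unset Printing Implicit Defensive.
Import GRing.Theory.
Local Open Scope ring_scope.

(* A (basis) label of an infinite chain of N-state registers:
   register r (0-based, r : nat) holds s r : 'Z_N.  Use only with 1 < N. *)
Definition label (N : nat) := nat -> 'Z_N.

Definition braket (N : nat) (s t : label N) : algC :=
  if excluded_middle_informative (s = t) then 1 else 0.

(* Spin-flip error  \bigotimes_r X_r^{a_r}  acting on a basis state:
   |s> |-> |s + a> (registerwise, mod N). *)
Definition Xop (N : nat) (a : label N) (s : label N) : label N :=
  fun r => s r + a r.

(* An encoding (on basis labels) corrects the error set E:
   for all A, B in E and all labels k, k',
   <k'_enc| A^dagger B |k_enc> = Lambda_{A,B} delta_{k k'},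
   where <k'_enc|A^dagger B|k_enc> = <A k'_enc | B k_enc>. *)
Definition corrects (N : nat) (enc : label N -> label N) (E : label N -> Prop) :=
  forall a b : label N, E a -> E b ->
    exists Lambda : algC, forall k k' : label N,
      braket (Xop a (enc k')) (Xop b (enc k)) = Lambda * braket k' k.

(* k_{i-j} with the convention k_m = 0 for m <= 0 (0-based: input i is k_{i+1}). *)
Definition kback (N : nat) (k : label N) (j i : nat) : 'Z_N :=
  if (j <= i)%N then k (i - j)%N else 0.

(* The encoding: input k_{i+1} (0-based index i) feeds output registers 2i, 2i+1:
   out(2i)   = k_i + k_{i-2},
   out(2i+1) = k_i + k_{i-1} + k_{i-2}. *)
Definition conv_enc (N : nat) (k : label N) : label N :=
  fun r => if ~~ odd r then k r./2 + kback k 2 r./2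
           else k r./2 + kback k 1 r./2 + kback k 2 r./2.

Definition one_flip_per_four (N : nat) (a : label N) : Prop :=
  forall r i j : nat, (r <= i)%N -> (i < j)%N -> (j <= r + 3)%N ->
    a i = 0 \/ a j = 0.

(* The Knill-Laflamme condition for spin-flip errors reduces to a classical
   separation property: X_a |enc k'> = X_b |enc k> must force k' = k, and then
   Lambda_{a,b} = <a|b> works.  The encoding is additive, so enc (k' - k) = b - a.
   If d = k' - k is nonzero and i is its first nonzero index, output registers
   2i, ..., 2i+3 of enc d read (x, x, y, y + x) with x = d_i <> 0, so at least
   three of them are nonzero; but b - a has at most two nonzero entries among
   any four consecutive registers. *)

From mathcomp Require Import all_boot all_algebra all_field.
From mathcomp Require Import ring.
From Stdlib Require Import Classical ClassicalEpsilon FunctionalExtensionality.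
Set Implicit Arguments. Unset Strict Implicit. Unset Printing Implicit Defensive.
Import GRing.Theory.
Local Open Scope ring_scope.

Lemma braket_id N (s : label N) : braket s s = 1.
Proof. by rewrite /braket; case: excluded_middle_informative. Qed.

Lemma braket_neq N (s t : label N) : s <> t -> braket s t = 0.
Proof. by rewrite /braket; case: excluded_middle_informative. Qed.

Lemma braket_Xop N (a b s : label N) : braket (Xop a s) (Xop b s) = braket a b.
Proof.
have [<-|neq_ab] := classic (a = b); first by rewrite !braket_id.
rewrite !braket_neq // => eq_Xop; apply: neq_ab; apply: functional_extensionality => r.
exact: addrI (congr1 (fun f => f r) eq_Xop).
Qed.

Lemma corrects_of_separating N (enc : label N -> label N) (E : label N -> Prop) :
  (forall a b k k', E a -> E b -> Xop a (enc k') = Xop b (enc k) -> k' = k) ->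
  corrects enc E.
Proof.
move=> separating a b Ea Eb; exists (braket a b) => k k'.
have [->|neq_k] := classic (k' = k); first by rewrite braket_Xop braket_id mulr1.
rewrite (braket_neq neq_k) mulr0 braket_neq // => eq_enc.
exact/neq_k/(separating _ _ _ _ Ea Eb).
Qed.

Definition sub_label N (s t : label N) : label N := fun r => s r - t r.

Lemma kback_sub N (k k' : label N) j i :
  kback (sub_label k' k) j i = kback k' j i - kback k j i.
Proof. by rewrite /kback; case: ifP; rewrite ?subr0. Qed.

Lemma conv_enc_sub N (k k' : label N) :
  conv_enc (sub_label k' k) = sub_label (conv_enc k') (conv_enc k).
Proof.
apply: functional_extensionality => r.
by rewrite /conv_enc /sub_label !kback_sub /sub_label; case: odd => /=; ring.
Qed.

Lemma conv_enc_double N (k : label N) i : conv_enc k i.*2 = k i + kback k 2 i.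
Proof. by rewrite /conv_enc odd_double /= doubleK. Qed.

Lemma conv_enc_doubleS N (k : label N) i :
  conv_enc k i.*2.+1 = k i + kback k 1 i + kback k 2 i.
Proof. by rewrite /conv_enc /= odd_double /= uphalf_double. Qed.

Lemma kback_eq0 N (k : label N) i j l :
  (forall m, (m < i)%N -> k m = 0) -> (l < j + i)%N -> kback k j l = 0.
Proof.
by move=> k_lt_i l_lt; rewrite /kback; case: ifP => // le_jl; rewrite k_lt_i ?ltn_subLR.
Qed.

Lemma kback1S N (k : label N) l : kback k 1 l.+1 = k l.
Proof. by rewrite /kback subn1. Qed.

Lemma conv_enc_first_window N (d : label N) i :
  (forall m, (m < i)%N -> d m = 0) ->
  [/\ conv_enc d i.*2 = d i, conv_enc d (i.*2 + 1)%N = d i,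
      conv_enc d (i.*2 + 2)%N = d i.+1 & conv_enc d (i.*2 + 3)%N = d i.+1 + d i].
Proof.
move=> d_lt_i; have kb0 j l : (l < j + i)%N -> kback d j l = 0 := kback_eq0 d_lt_i.
rewrite addn1 addn2 addn3 -[i.*2.+2]/(i.+1).*2 -[i.*2.+3]/(i.+1).*2.+1.
by rewrite !conv_enc_double !conv_enc_doubleS kback1S !kb0 ?addr0.
Qed.

Definition window_support N (c : label N) (r : nat) : {set 'I_4} :=
  [set u : 'I_4 | c (r + u)%N != 0].

Lemma card_window_support_le1 N (a : label N) r :
  one_flip_per_four a -> (#|window_support a r| <= 1)%N.
Proof.
move=> one_flip.
have flip_lt (u v : 'I_4) : (u < v)%N -> a (r + u)%N = 0 \/ a (r + v)%N = 0.
  move=> lt_uv; apply: one_flip; first exact: leq_addr.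
    by rewrite ltn_add2l.
  by rewrite leq_add2l -ltnS.
apply/card_le1_eqP => u v; rewrite !inE => /eqP au /eqP av.
by case: (ltngtP u v) => [/flip_lt[]|/flip_lt[]|/val_inj].
Qed.

Lemma window_support_sub N (a b : label N) r :
  window_support (sub_label b a) r \subset window_support a r :|: window_support b r.
Proof.
apply/subsetP => u; rewrite !inE /sub_label.
by apply: contraR; rewrite negb_or !negbK => /andP[/eqP-> /eqP->]; rewrite subrr.
Qed.

Lemma card_window_support_sub_le2 N (a b : label N) r :
  one_flip_per_four a -> one_flip_per_four b ->
  (#|window_support (sub_label b a) r| <= 2)%N.
Proof.
move=> one_flip_a one_flip_b.
apply: leq_trans (subset_leq_card (window_support_sub a b r)) _.
apply: leq_trans (leq_card_setU _ _) _.
by rewrite -[2%N]/(1 + 1)%N leq_add ?card_window_support_le1.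
Qed.

Lemma card_window_support_ge3 N (d : label N) i :
  (forall m, (m < i)%N -> d m = 0) -> d i != 0 ->
  (3 <= #|window_support (conv_enc d) i.*2|)%N.
Proof.
move=> /conv_enc_first_window[e0 e1 e2 e3] di_neq0.
set S := window_support _ _.
have inS (u : 'I_4) : (u \in S) = (conv_enc d (i.*2 + u)%N != 0) by rewrite inE.
have S0 : 0 \in S by rewrite inS addn0 e0.
have S1 : 1 \in S by rewrite inS /= modn_small // e1.
suff [j Sj [j_neq0 j_neq1]] : exists2 j, j \in S & j != 0 /\ j != 1.
  apply: leq_trans (subset_leq_card (_ : [set 0; 1; j] \subset S)).
    rewrite -setUA !cardsU1 cards1 !inE (eq_sym 0 j) (eq_sym 1 j).
    by rewrite (negPf j_neq0) j_neq1.
  by apply/subsetP => u; rewrite !inE -inS => /orP[/orP[]|] /eqP->.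
have [di1_eq0|di1_neq0] := eqVneq (d i.+1) 0.
- by exists 3; rewrite // inS /= !modn_small // e3 di1_eq0 add0r.
- by exists 2; rewrite // inS /= !modn_small // e2.
Qed.

Lemma conv_enc_separating N (a b k k' : label N) :
  one_flip_per_four a -> one_flip_per_four b ->
  Xop a (conv_enc k') = Xop b (conv_enc k) -> k' = k.
Proof.
move=> flip_a flip_b eq_Xop.
have enc_d : conv_enc (sub_label k' k) = sub_label b a.
  rewrite conv_enc_sub; apply: functional_extensionality => r.
  rewrite /sub_label -(addrK (a r) (conv_enc k' r)).
  by rewrite [_ + a r](congr1 (fun f => f r) eq_Xop) /Xop; ring.
suff d_eq0 i : sub_label k' k i = 0.
  by apply: functional_extensionality => i; apply/eqP; rewrite -subr_eq0; apply/eqP/d_eq0.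
elim/ltn_ind: i => i IH; have [//|d_neq0] := eqVneq (sub_label k' k i) 0.
have := card_window_support_ge3 IH d_neq0.
by rewrite enc_d ltnNge card_window_support_sub_le2.
Qed.

Theorem lemma3 (N : nat) (hN : (1 < N)%N) :
  corrects (@conv_enc N) (@one_flip_per_four N).
Proof. exact/corrects_of_separating/conv_enc_separating. Qed.
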